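(* Let $M,N\ge 0$. For every interval of rank two in the poset of shuffles $W_{MN}$, the labeling $\Lambda$ behaves in one of the following two ways. (1) If the interval is isomorphic to $C_2\times C_2$, then its two maximal chains $c_1,c_2$, with labels induced by $\Lambda$ (i.e., the labels of the two coverings in the interval, computed within any maximal chain of $W_{MN}$ containing the given rank-two subchain together with a fixed chain below and a fixed chain above the interval), satisfy $(l_1,l_2)$ for $c_1$ and $(l_2,l_1)$ for $c_2$, where $l_1\neq l_2$ are letters of $\mathcal{A}\cup\mathcal{X}$. (2) If the interval is isomorphic to $\Pi_3$, then its three maximal chains $\gamma_1,\gamma_2,\gamma_3$ have induced labels $(x_j,l)$, $(l,x_j)$ and $(x_j,x_j)$ respectively, for some $x_j\in\mathcal{X}$ and some $l\in\mathcal{A}\cup(\mathcal{X}\setminus\{x_j\})$.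
   Context: $C_2$ denotes the 2-element chain and $\Pi_3$ the lattice of set partitions of a 3-element set (a 5-element poset of rank two). Let $\mathcal{A}=\{a_1,\dots,a_M\}$ and $\mathcal{X}=\{x_1,\dots,x_N\}$ be disjoint sets. A shuffle word is a word (possibly empty) with distinct letters from $\mathcal{A}\cup\mathcal{X}$ in which the letters of $\mathcal{A}$ appear in increasing order of subscripts and likewise those of $\mathcal{X}$. The poset of shuffles $W_{MN}$ consists of all shuffle words ordered by the reflexive-transitive closure of: $w\lessdot w'$ iff $w'$ is obtained from $w$ by deleting a letter of $\mathcal{A}$ or inserting a letter of $\mathcal{X}$; $\hat0=a_1\cdots a_M$, $\hat1=x_1\cdots x_N$. For a maximal chain $c=(\hat0=w^0\lessdot\cdots\lessdot w^{M+N}=\hat1)$ define $\Lambda(c)=(\Lambda_1(c),\dots,\Lambda_{M+N}(c))$ by: (x) if $w^{i+1}$ is obtained from $w^i$ by inserting $x_k$, then $\Lambda_{i+1}(c)=x_k$; (xa) if $w^i=u\,x_k\,a_m\,v$ and $w^{i+1}=u\,x_k\,v$ and this is the first deletion along $c$, starting from $\hat0$, of a letter located immediately after $x_k$, then $\Lambda_{i+1}(c)=x_k$; (a) if $w^{i+1}$ is obtained by deleting $a_j\in\mathcal{A}$ and this is not of type (xa), then $\Lambda_{i+1}(c)=a_j$. *)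

From mathcomp Require Import all_boot.
Set Implicit Arguments. Unset Strict Implicit. Unset Printing Implicit Defensive.

(* Letters: [inl m] is a_m (1 <= m <= M), [inr k] is x_k (1 <= k <= N). *)
Definition letter := (nat + nat)%type.
Definition word := seq letter.

Definition letter_ok (M N : nat) (l : letter) : bool :=
  match l with inl m => (0 < m <= M) | inr k => (0 < k <= N) end.

Definition getA (l : letter) : option nat := if l is inl m then Some m else None.
Definition getX (l : letter) : option nat := if l is inr k then Some k else None.

Definition shuffle (M N : nat) (w : word) : bool :=
  [&& uniq w, all (letter_ok M N) w,
      sorted ltn (pmap getA w) & sorted ltn (pmap getX w)].

Definition shcover (M N : nat) (w w' : word) : Prop :=
  shuffle M N w /\ shuffle M N w' /\
  ((exists (u v : word) (m : nat), w = u ++ inl m :: v /\ w' = u ++ v) \/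
   (exists (u v : word) (k : nat), w = u ++ v /\ w' = u ++ inr k :: v)).

Definition hat0 (M : nat) : word := [seq inl m | m <- iota 1 M].
Definition hat1 (N : nat) : word := [seq inr k | k <- iota 1 N].

Fixpoint cpath (R : word -> word -> Prop) (x : word) (s : seq word) : Prop :=
  match s with
  | [::] => True
  | y :: s' => R x y /\ cpath R y s'
  end.

Definition rank_two (M N : nat) (u v : word) : Prop :=
  (exists w, shcover M N u w /\ shcover M N w v) /\
  (forall p : seq word, cpath (shcover M N) u p -> last u p = v -> size p = 2).

Definition inserted (w w' : word) : letter :=
  head (inl 0) [seq x <- w' | x \notin w].
Definition deleted (w w' : word) : letter :=
  head (inl 0) [seq x <- w | x \notin w'].

Definition del_pred (w w' : word) : option letter :=
  if size w' < size w then
    let a := deleted w w' in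
    if index a w is p.+1 then Some (nth a w p) else None
  else None.

(* Lambda c i = Lambda_{i+1}(c), the label of the covering w^i <. w^{i+1}
   of the chain c = (w^0, ..., w^{M+N}). *)
Definition Lambda (c : seq word) (i : nat) : letter :=
  let w := nth [::] c i in
  let w' := nth [::] c i.+1 in
  if size w < size w' then inserted w w'
  else match del_pred w w' with
       | Some (inr k) =>
           if has (fun j => del_pred (nth [::] c j) (nth [::] c j.+1) == Some (inr k))
                  (iota 0 i)
           then deleted w w' else inr k
       | _ => deleted w w'
       end.

(* Each covering of W_MN deletes one letter a_m or inserts one letter x_k, so a word
   strictly inside a rank-two interval [u, v] is reached from u by one of the two moves
   leading to v.  Two deletions, or two insertions, commute and the interval is a square.
   A deletion of a_m and an insertion of x_j commute as well, unless x_j is inserted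
   exactly at the place of a_m: then u with x_j put just before a_m, just after a_m, or
   replacing a_m all lie between u and v, and the interval is Pi_3.
   The label of a covering depends only on the covering and on the indices k for which
   rule (xa) already fired below it, and one checks that each move gets the same label in
   both orders.  The exception is Pi_3: as x_j does not occur in u, deleting a_m right after
   the freshly inserted x_j is the first (xa) move for x_j, whence the labels (x_j, x_j). *)

From mathcomp Require Import all_boot zify.
Set Implicit Arguments. Unset Strict Implicit. Unset Printing Implicit Defensive.

Section SeqSurgery.
Variable T : eqType.
Implicit Types (x y a b c z : T) (s t p q r : seq T).

Lemma cat_eq_cat s1 s2 t1 t2 : s1 ++ s2 = t1 ++ t2 ->
  exists r, (s1 = t1 ++ r /\ t2 = r ++ s2) \/ (t1 = s1 ++ r /\ s2 = r ++ t2).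
Proof.
elim: s1 t1 => [|x s1 IH] [|y t1] /=.
- by move=> ->; exists [::]; left.
- by move=> ->; exists (y :: t1); right.
- by move=> <-; exists (x :: s1); left.
- by case=> -> /IH [r [[-> ->]|[-> ->]]]; exists r; [left|right].
Qed.

Lemma cat_eq_cat_cons s1 s2 t1 t2 a : s1 ++ s2 = t1 ++ a :: t2 ->
  (exists r, s1 = t1 ++ a :: r /\ t2 = r ++ s2) \/
  (exists r, t1 = s1 ++ r /\ s2 = r ++ a :: t2).
Proof.
case/cat_eq_cat=> [[|y r] [[-> E]|[-> ->]]].
- by right; exists [::]; rewrite !cats0 E.
- by right; exists [::].
- by case: E => -> ->; left; exists r.
- by right; exists (y :: r).
Qed.

Lemma cat_cons_eq_cat_cons s1 s2 t1 t2 x a :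
  s1 ++ x :: s2 = t1 ++ a :: t2 -> x != a ->
  (exists r, s1 = t1 ++ a :: r /\ t2 = r ++ x :: s2) \/
  (exists r, t1 = s1 ++ x :: r /\ s2 = r ++ a :: t2).
Proof.
move=> /cat_eq_cat_cons[[r [-> ->]]|[[|y r] [-> E]]] xa; first by left; exists r.
  by case: E xa => ->; rewrite eqxx.
by case: E => -> ->; right; exists r.
Qed.

Lemma catsI p : injective (cat p).
Proof. by elim: p => // x p IH s t [] /IH. Qed.

Lemma mem_cat_cons x p q a : x \in p ++ q -> x \in p ++ a :: q.
Proof. by rewrite !mem_cat inE => /orP[] ->; rewrite ?orbT. Qed.

Lemma mem_cat_cons_neq x p q a : x != a -> (x \in p ++ a :: q) = (x \in p ++ q).
Proof. by rewrite !mem_cat inE => /negbTE ->. Qed.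

Lemma mem_cat_cons_eq x p q a : x \in p ++ a :: q -> x \notin p ++ q -> x = a.
Proof. by rewrite !mem_cat inE => /orP[->//|/orP[/eqP-> //|->]]; rewrite orbT. Qed.

Lemma filter_notin_subset s t : {subset s <= t} -> [seq y <- s | y \notin t] = [::].
Proof. by move=> st; apply/eqP; rewrite -[_ == _]negbK -has_filter; apply/hasPn => y /st ->. Qed.

Lemma uniq_cat_cons p q a : uniq (p ++ a :: q) = (a \notin p ++ q) && uniq (p ++ q).
Proof. by rewrite -cat1s uniq_catCA. Qed.

Lemma uniq_cat_cons_inj s1 s2 t1 t2 c : uniq (s1 ++ c :: s2) ->
  s1 ++ c :: s2 = t1 ++ c :: t2 -> s1 = t1 /\ s2 = t2.
Proof.
move=> U E.
have notin_prefix p q : uniq (p ++ c :: q) -> c \notin p.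
  by rewrite uniq_cat_cons mem_cat negb_or => /andP[/andP[]].
have sizeE : size s1 = size t1.
  move: (congr1 (index c) E); rewrite !index_cat (negbTE (notin_prefix _ _ U)).
  by rewrite E in U; rewrite (negbTE (notin_prefix _ _ U)) /= eqxx !addn0.
by move/eqP: E; rewrite eqseq_cat // => /andP[/eqP -> /eqP [->]].
Qed.

Lemma uniq_cat_mem_neq s t x y : uniq (s ++ t) -> x \in s -> y \in t -> x != y.
Proof.
rewrite cat_uniq => /and3P[_ /hasPn st _] xs yt.
by apply: contraNneq (st _ yt) => <-.
Qed.

Lemma mem_ohead_rev p z : ohead (rev p) = Some z -> z \in p.
Proof. by case/lastP: p => // p y; rewrite rev_rcons => -[<-]; rewrite mem_rcons mem_head. Qed.

Lemma ohead_rev_cat p s : s != [::] -> ohead (rev (p ++ s)) = ohead (rev s).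
Proof. by case/lastP: s => // s y _; rewrite -rcons_cat !rev_rcons. Qed.

Lemma remove_one_of_two p r q a b s1 s2 c :
  uniq (p ++ a :: r ++ b :: q) -> p ++ a :: r ++ b :: q = s1 ++ c :: s2 ->
  c \notin p ++ r ++ q -> s1 ++ s2 = p ++ r ++ b :: q \/ s1 ++ s2 = p ++ a :: r ++ q.
Proof.
move=> U E cn.
have cu : c \in p ++ a :: r ++ b :: q by rewrite E mem_cat mem_head orbT.
have [cr|cr] := boolP (c \in p ++ r ++ b :: q).
  have cb : c = b.
    by apply: (mem_cat_cons_eq (p := p ++ r) (q := q)); rewrite -catA.
  have U' : uniq ((p ++ a :: r) ++ b :: q) by rewrite -catA.
  have E' : (p ++ a :: r) ++ b :: q = s1 ++ b :: s2 by rewrite -catA E cb.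
  by right; case: (uniq_cat_cons_inj U' E') => <- <-; rewrite -catA.
have ca : c = a by apply: mem_cat_cons_eq cu cr.
by left; rewrite ca in E; case: (uniq_cat_cons_inj U E) => <- <-.
Qed.

Lemma after_shape_inj p r q p' r' q' a x :
  uniq (p ++ a :: r ++ q) -> uniq (p ++ r ++ x :: q) ->
  p ++ a :: r ++ q = p' ++ a :: r' ++ q' -> p ++ r ++ x :: q = p' ++ r' ++ x :: q' ->
  [/\ p = p', r = r' & q = q'].
Proof.
move=> Ua Ux Ea Ex; have [Ep _] := uniq_cat_cons_inj Ua Ea.
have Ux' : uniq ((p ++ r) ++ x :: q) by rewrite -catA.
have [Epr Eq] : p ++ r = p' ++ r' /\ q = q'.
  by apply: (uniq_cat_cons_inj Ux'); rewrite -!catA.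
by rewrite -Ep in Epr; split=> //; apply: catsI Epr.
Qed.

Lemma before_shape_inj p r q p' r' q' a x :
  uniq (p ++ r ++ a :: q) -> uniq (p ++ x :: r ++ q) ->
  p ++ r ++ a :: q = p' ++ r' ++ a :: q' -> p ++ x :: r ++ q = p' ++ x :: r' ++ q' ->
  [/\ p = p', r = r' & q = q'].
Proof.
move=> Ua Ux Ea Ex; have [Ep _] := uniq_cat_cons_inj Ux Ex.
have Ua' : uniq ((p ++ r) ++ a :: q) by rewrite -catA.
have [Epr Eq] : p ++ r = p' ++ r' /\ q = q'.
  by apply: (uniq_cat_cons_inj Ua'); rewrite -!catA.
by rewrite -Ep in Epr; split=> //; apply: catsI Epr.
Qed.

Lemma after_before_shape p r q p' r' q' a x :
  uniq (p ++ a :: r ++ q) -> uniq (p ++ r ++ x :: q) ->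
  p ++ a :: r ++ q = p' ++ r' ++ a :: q' -> p ++ r ++ x :: q = p' ++ x :: r' ++ q' ->
  [/\ r = [::], r' = [::], p = p' & q = q'].
Proof.
move=> Ua Ux Ea Ex.
have [Ep Erq] : p = p' ++ r' /\ r ++ q = q' by apply: (uniq_cat_cons_inj Ua); rewrite Ea catA.
have Ux' : uniq ((p ++ r) ++ x :: q) by rewrite -catA.
have [Epr Eq] : p ++ r = p' /\ q = r' ++ q' by apply: (uniq_cat_cons_inj Ux'); rewrite -catA.
have : p' ++ r' ++ r = p' ++ [::] by rewrite catA -Ep Epr cats0.
move/catsI/nilP; rewrite cat_nilp => /andP[/nilP r'0 /nilP r0].
by move: Ep Erq; rewrite r0 r'0 !cats0.
Qed.

End SeqSurgery.

Section Shuffles.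
Variables M N : nat.

Lemma shuffle_uniq w : shuffle M N w -> uniq w.
Proof. by case/and4P. Qed.

Lemma shuffle_letter_ok w l : shuffle M N w -> l \in w -> letter_ok M N l.
Proof. by case/and4P=> _ /allP ok _ _ /ok. Qed.

Lemma shuffle_del p q c : shuffle M N (p ++ c :: q) -> shuffle M N (p ++ q).
Proof.
have sub_pq : subseq (p ++ q) (p ++ c :: q) by rewrite cat_subseq ?subseq_cons.
have sub_pmap f : subseq (pmap f (p ++ q)) (pmap f (p ++ c :: q)).
  by rewrite !pmap_cat cat_subseq //=; case: (f c) => //= n; apply: subseq_cons.
case/and4P=> U ok SA SX; apply/and4P; split.
- exact: subseq_uniq U.
- by apply/allP=> z /(mem_subseq sub_pq); apply: (allP ok).
- by apply: subseq_sorted SA; [apply: ltn_trans | apply: sub_pmap].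
- by apply: subseq_sorted SX; [apply: ltn_trans | apply: sub_pmap].
Qed.

Lemma shuffle_ins p q k s : shuffle M N (p ++ q) -> shuffle M N s ->
  pmap getX (p ++ inr k :: q) = pmap getX s -> shuffle M N (p ++ inr k :: q).
Proof.
case/and4P=> U ok SA _ Ss EX; have /and4P[_ _ _ SXs] := Ss.
have UX : uniq (pmap getX (p ++ inr k :: q)) by rewrite EX (sorted_uniq ltn_trans ltnn SXs).
have ks : inr k \in s.
  have : k \in pmap getX s by rewrite -EX pmap_cat mem_cat /= mem_head orbT.
  by rewrite mem_pmap => /mapP[[m|j] // js [->]].
apply/and4P; split.
- rewrite uniq_cat_cons U andbT; apply: contraL UX => kpq.
  rewrite pmap_cat /= uniq_cat_cons -pmap_cat mem_pmap.
  by rewrite (map_f getX kpq).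
- by move: ok (shuffle_letter_ok Ss ks); rewrite !all_cat /= => /andP[-> ->] ->.
- by rewrite pmap_cat /= -pmap_cat.
- by rewrite EX.
Qed.

Definition deletion (w w' : word) : Prop :=
  exists (p q : word) (m : nat), w = p ++ inl m :: q /\ w' = p ++ q.
Definition insertion (w w' : word) : Prop :=
  exists (p q : word) (k : nat), w = p ++ q /\ w' = p ++ inr k :: q.

Lemma shcover_del p q m : shuffle M N (p ++ inl m :: q) ->
  shcover M N (p ++ inl m :: q) (p ++ q).
Proof. by move=> S; do !split => //; [apply: shuffle_del S | left; exists p, q, m]. Qed.

Lemma shcover_ins p q k : shuffle M N (p ++ q) -> shuffle M N (p ++ inr k :: q) ->
  shcover M N (p ++ q) (p ++ inr k :: q).
Proof. by move=> S S'; do !split => //; right; exists p, q, k. Qed.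

Lemma shcoverE w w' : shcover M N w w' ->
  deletion w w' /\ size w = (size w').+1 \/ insertion w w' /\ size w' = (size w).+1.
Proof.
case=> _ [_ [[p [q [m [-> ->]]]]|[p [q [k [-> ->]]]]]].
- by left; split; [exists p, q, m | rewrite !size_cat addnS].
- by right; split; [exists p, q, k | rewrite !size_cat addnS].
Qed.

Section TwoSteps.
Variables u w v : word.
Hypotheses (uw : shcover M N u w) (wv : shcover M N w v).

Lemma shcover2_del : size u = (size v).+2 -> deletion u w /\ deletion w v.
Proof. by case/shcoverE: uw => -[D1 s1]; case/shcoverE: wv => -[D2 s2] //; lia. Qed.

Lemma shcover2_ins : size v = (size u).+2 -> insertion u w /\ insertion w v.
Proof. by case/shcoverE: uw => -[D1 s1]; case/shcoverE: wv => -[D2 s2] //; lia. Qed.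

Lemma shcover2_mixed : size u = size v ->
  deletion u w /\ insertion w v \/ insertion u w /\ deletion w v.
Proof. by case/shcoverE: uw => -[D1 s1]; case/shcoverE: wv => -[D2 s2]; auto; lia. Qed.

End TwoSteps.

Lemma shcover_mem_inr w w' k : shcover M N w w' -> inr k \in w -> inr k \in w'.
Proof.
case=> _ [_ [[p [q [m [-> ->]]]]|[p [q [j [-> ->]]]]]]; last exact: mem_cat_cons.
by rewrite mem_cat_cons_neq.
Qed.

Lemma shcover_mem_inl w w' m : shcover M N w w' -> inl m \in w' -> inl m \in w.
Proof.
case=> _ [_ [[p [q [a [-> ->]]]]|[p [q [k [-> ->]]]]]]; first exact: mem_cat_cons.
by rewrite mem_cat_cons_neq.
Qed.

Lemma mixed_middle_shapes u w v m j : shcover M N u w -> shcover M N w v -> size u = size v ->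
  (forall c, inl c \in u -> inl c \notin v -> c = m) ->
  (forall k, inr k \in v -> inr k \notin u -> k = j) ->
  [\/ exists p q, u = p ++ inl m :: q /\ w = p ++ q,
      exists p r q, [/\ u = p ++ inl m :: r ++ q, v = p ++ r ++ inr j :: q
                       & w = p ++ inl m :: r ++ inr j :: q]
    | exists p r q, [/\ u = p ++ r ++ inl m :: q, v = p ++ inr j :: r ++ q
                       & w = p ++ inr j :: r ++ inl m :: q]].
Proof.
move=> uw wv size_uv onlyA onlyX.
have W : uniq w by case: wv => /shuffle_uniq.
have [[[s1 [s2 [c [Eu Ew]]]] _] | [[s1 [s2 [c [Eu Ew]]]] [t1 [t2 [d [Ew' Ev]]]]]] :=
  shcover2_mixed uw wv size_uv.
- have cw : inl c \notin w.
    by rewrite Ew; case: uw => /shuffle_uniq; rewrite Eu uniq_cat_cons => /andP[].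
  have cm : c = m.
    apply: onlyA; first by rewrite Eu mem_cat mem_head orbT.
    by apply: contra cw; apply: shcover_mem_inl wv.
  by constructor 1; exists s1, s2; rewrite -cm.
- have cj : c = j.
    apply: onlyX; first by apply: (shcover_mem_inr wv); rewrite Ew mem_cat mem_head orbT.
    by move: W; rewrite Ew Eu uniq_cat_cons => /andP[].
  have dm : d = m.
    apply: onlyA; first by apply: (shcover_mem_inl uw); rewrite Ew' mem_cat mem_head orbT.
    by move: W; rewrite Ew' Ev uniq_cat_cons => /andP[].
  rewrite cj in Ew; rewrite dm in Ew'.
  case: (cat_cons_eq_cat_cons (etrans (esym Ew) Ew') isT) => [[r [E1 E2]] | [r [E1 E2]]].
  + by constructor 2; exists t1, r, s2; rewrite Eu Ev Ew E1 E2 -!catA.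
  + by constructor 3; exists s1, r, t2; rewrite Eu Ev Ew E1 E2 -!catA.
Qed.

End Shuffles.

(* [used k] means that rule (xa) has already fired for x_k, i.e. an earlier deletion
   removed the letter right after x_k. *)
Definition del_label (used : pred nat) (P : option letter) (a : letter) : letter :=
  if P is Some (inr k) then (if used k then a else inr k) else a.

Definition step_label (used : pred nat) (w w' : word) : letter :=
  if size w < size w' then inserted w w'
  else del_label used (del_pred w w') (deleted w w').

Definition mark_used (used : pred nat) (P : option letter) : pred nat :=
  fun k => used k || (P == Some (inr k)).

Definition interval_labels (used : pred nat) (u v w : word) : letter * letter :=
  (step_label used u w, step_label (mark_used used (del_pred u w)) w v).

Lemma del_label_mem used P a (s : word) : a \in s ->
  (forall k, P = Some (inr k) -> inr k \in s) -> del_label used P a \in s.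
Proof. by case: P => [[m|k]|] //= aS /(_ k erefl); case: (used k). Qed.

Lemma del_label_ohead_rev_mem used p a q : del_label used (ohead (rev p)) a \in p ++ a :: q.
Proof. by apply: del_label_mem => [|k /mem_ohead_rev kp]; rewrite mem_cat ?kp ?mem_head ?orbT. Qed.

Lemma eq_del_label f g P a : (forall k, P = Some (inr k) -> f k = g k) ->
  del_label f P a = del_label g P a.
Proof. by case: P => [[m|k]|] //= /(_ k erefl) ->. Qed.

Lemma del_label_marked used P a : del_label (mark_used used P) P a = a.
Proof. by case: P => [[m|k]|] //=; rewrite /mark_used eqxx orbT. Qed.

Lemma del_label_mark_other used P Q a :
  (forall k, P = Some (inr k) -> Q != Some (inr k)) ->
  del_label (mark_used used Q) P a = del_label used P a.
Proof.
by move=> PQ; apply: eq_del_label => k /PQ /negbTE; rewrite /mark_used => ->; rewrite orbF.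
Qed.

Lemma mark_used_None used : mark_used used None =1 used.
Proof. by move=> k; rewrite /mark_used orbF. Qed.

Section Steps.
Variables (p q : word) (c : letter).
Hypothesis U : uniq (p ++ c :: q).

Lemma deleted_del : deleted (p ++ c :: q) (p ++ q) = c.
Proof.
rewrite /deleted filter_cat filter_notin_subset => [|y yp]; last by rewrite mem_cat yp.
by move: U; rewrite uniq_cat_cons => /andP[/= -> _].
Qed.

Lemma del_pred_del : del_pred (p ++ c :: q) (p ++ q) = ohead (rev p).
Proof.
rewrite /del_pred !size_cat /= addnS ltnSn deleted_del index_cat.
move: U; rewrite uniq_cat_cons mem_cat negb_or => /andP[/andP[/negbTE -> _] _] /=.
rewrite eqxx addn0; case/lastP: p => // s y.
by rewrite size_rcons nth_cat size_rcons ltnSn nth_rcons ltnn eqxx rev_rcons.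
Qed.

Lemma step_label_del used :
  step_label used (p ++ c :: q) (p ++ q) = del_label used (ohead (rev p)) c.
Proof. by rewrite /step_label !size_cat /= addnS ltnNge leqnSn /= del_pred_del deleted_del. Qed.

Lemma step_label_ins used : step_label used (p ++ q) (p ++ c :: q) = c.
Proof.
rewrite /step_label !size_cat /= addnS ltnSn /inserted filter_cat filter_notin_subset => [|y yp].
  by move: U; rewrite uniq_cat_cons => /andP[/= -> _].
by rewrite mem_cat yp.
Qed.

End Steps.

Lemma del_pred_ins p q c : del_pred (p ++ q) (p ++ c :: q) = None.
Proof. by rewrite /del_pred !size_cat /= addnS ltnNge leqnSn. Qed.

Lemma del_pred_mem w w' l : del_pred w w' = Some l -> l \in w.
Proof.
rewrite /del_pred; case: ifP => // _; case E: index => [|i] // [<-].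
by apply: mem_nth; rewrite -ltnS -E ltnS index_size.
Qed.

Lemma eq_step_label f g w w' : f =1 g -> step_label f w w' = step_label g w w'.
Proof. by move=> fg; rewrite /step_label (eq_del_label _ (fun k _ => fg k)). Qed.

Lemma Lambda_step c i : Lambda c i =
  step_label (fun k => has (fun j => del_pred (nth [::] c j) (nth [::] c j.+1) == Some (inr k))
                          (iota 0 i))
             (nth [::] c i) (nth [::] c i.+1).
Proof. by []. Qed.

Definition chain_used (x0 : word) (lo : seq word) : pred nat := fun k =>
  has (fun j => del_pred (nth [::] (x0 :: lo) j) (nth [::] (x0 :: lo) j.+1) == Some (inr k))
      (iota 0 (size lo)).

Lemma Lambda_interval x0 lo w v hi (c := x0 :: lo ++ w :: v :: hi) :
  (Lambda c (size lo), Lambda c (size lo).+1) =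
  interval_labels (chain_used x0 lo) (last x0 lo) v w.
Proof.
have nth_lo j : j <= size lo -> nth [::] c j = nth [::] (x0 :: lo) j.
  by move=> jlo; rewrite /c -cat_cons nth_cat /= ltnS jlo.
have c_lo : nth [::] c (size lo) = last x0 lo.
  by rewrite nth_lo // -[size lo]/((size (x0 :: lo)).-1) nth_last.
have c_w : nth [::] c (size lo).+1 = w by rewrite /c -cat_cons nth_cat /= ltnn subnn.
have c_v : nth [::] c (size lo).+2 = v.
  by rewrite /c -cat_cons nth_cat /= ltnNge leqnSn /= subSnn.
have used_lo k : has (fun j => del_pred (nth [::] c j) (nth [::] c j.+1) == Some (inr k))
    (iota 0 (size lo)) = chain_used x0 lo k.
  by apply: eq_in_has => j; rewrite mem_iota => /andP[_ jlo]; rewrite !nth_lo // ltnW.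
rewrite !Lambda_step c_lo c_w c_v (eq_step_label _ _ used_lo); congr pair.
apply: eq_step_label => k.
by rewrite -addn1 iotaD has_cat used_lo add0n -[iota _ 1]/[:: size lo] has_seq1 c_lo c_w.
Qed.

Lemma cpath_mem_inr M N x0 lo j k : cpath (shcover M N) x0 lo -> j <= size lo ->
  inr k \in nth [::] (x0 :: lo) j -> inr k \in last x0 lo.
Proof.
elim: lo x0 j => [|y lo IH] x0 [|j] //=; case=> x0y ylo; rewrite ?ltnS => jlo kj.
- exact: IH 0 ylo _ (shcover_mem_inr x0y kj).
- exact: IH j ylo jlo kj.
Qed.

Lemma chain_used_notin M N x0 lo k : cpath (shcover M N) x0 lo ->
  inr k \notin last x0 lo -> ~~ chain_used x0 lo k.
Proof.
move=> path_lo kn; apply/hasPn => j; rewrite mem_iota => /andP[_ jlo].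
by apply: contra kn => /eqP/del_pred_mem; apply: cpath_mem_inr path_lo (ltnW jlo).
Qed.

Section Intervals.
Variables M N : nat.

Definition square_interval (u v : word) (lab : word -> letter * letter) : Prop :=
  exists w1 w2 : word, w1 <> w2 /\
     (forall w, (shcover M N u w /\ shcover M N w v) <-> (w = w1 \/ w = w2)) /\
     exists l1 l2 : letter, letter_ok M N l1 /\ letter_ok M N l2 /\ l1 <> l2 /\
       lab w1 = (l1, l2) /\ lab w2 = (l2, l1).

Definition pi3_interval (u v : word) (lab : word -> letter * letter) : Prop :=
  exists w1 w2 w3 : word, w1 <> w2 /\ w1 <> w3 /\ w2 <> w3 /\
     (forall w, (shcover M N u w /\ shcover M N w v) <-> (w = w1 \/ w = w2 \/ w = w3)) /\
     exists (j : nat) (l : letter), (0 < j <= N) /\ letter_ok M N l /\ l <> inr j /\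
       lab w1 = (inr j, l) /\ lab w2 = (l, inr j) /\ lab w3 = (inr j, inr j).

Lemma eq_square_interval u v f g : f =1 g -> square_interval u v g -> square_interval u v f.
Proof.
move=> fg [w1 [w2 [? [? [l1 [l2 ?]]]]]].
by exists w1, w2; do 2!split=> //; exists l1, l2; rewrite !fg.
Qed.

Lemma eq_pi3_interval u v f g : f =1 g -> pi3_interval u v g -> pi3_interval u v f.
Proof.
move=> fg [w1 [w2 [w3 [? [? [? [? [j [l ?]]]]]]]]].
by exists w1, w2, w3; do 4!split=> //; exists j, l; rewrite !fg.
Qed.

Section DeletionDeletion.
Variables (p r q : word) (m m' : nat).
Local Notation u := (p ++ inl m :: r ++ inl m' :: q).
Local Notation v := (p ++ r ++ q).
Local Notation w1 := (p ++ r ++ inl m' :: q).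
Local Notation w2 := (p ++ inl m :: r ++ q).
Hypothesis Su : shuffle M N u.

Let U : uniq u := shuffle_uniq Su.
Let S2 : shuffle M N ((p ++ inl m :: r) ++ inl m' :: q). Proof. by rewrite -catA. Qed.
Let U2 : uniq ((p ++ inl m :: r) ++ inl m' :: q) := shuffle_uniq S2.

Lemma deldel_middle w : shcover M N u w -> shcover M N w v -> w = w1 \/ w = w2.
Proof.
move=> uw wv.
have [[s1 [s2 [c [Eu Ew]]]] [t1 [t2 [d [Ew' Ev]]]]] : deletion u w /\ deletion w v.
  by apply: shcover2_del uw wv _; rewrite !size_cat /= !size_cat /= !addnS.
have cw : inl c \notin w by move: U; rewrite Eu Ew uniq_cat_cons => /andP[].
rewrite Ew; apply: remove_one_of_two U Eu _.
by apply: contra cw; rewrite Ev Ew'; apply: mem_cat_cons.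
Qed.

Local Notation P := (ohead (rev p)).
Local Notation Q := (ohead (rev (inl m :: r))).

Lemma deldel_labels used :
  let l1 := del_label used P (inl m) in let l2 := del_label used Q (inl m') in
  [/\ interval_labels used u v w1 = (l1, l2), interval_labels used u v w2 = (l2, l1),
      l1 \in u, l2 \in u & l1 != l2].
Proof.
move=> l1 l2.
have PQ k : P = Some (inr k) -> Q = Some (inr k) -> False.
  move=> /mem_ohead_rev kp /mem_ohead_rev kr.
  have kt : inr k \in inl m :: r ++ inl m' :: q by rewrite -cat_cons mem_cat kr.
  by have := uniq_cat_mem_neq U kp kt; rewrite eqxx.
have l1_in : l1 \in p ++ [:: inl m] := del_label_ohead_rev_mem used p (inl m) [::].
have l2_in : l2 \in r ++ inl m' :: q.
  apply: del_label_mem => [|k /mem_ohead_rev]; first by rewrite mem_cat mem_head orbT.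
  by rewrite inE /= mem_cat => ->.
have uA : u = (p ++ [:: inl m]) ++ r ++ inl m' :: q by rewrite -catA.
have Uw1 : uniq ((p ++ r) ++ inl m' :: q).
  by move: U; rewrite uniq_cat_cons catA => /andP[].
have Uw2 : uniq (p ++ inl m :: r ++ q) by move: U2; rewrite uniq_cat_cons -catA => /andP[].
have E1 f : step_label f w1 v = del_label f (ohead (rev (p ++ r))) (inl m').
  by have := step_label_del Uw1 f; rewrite -!catA.
have E2 f : step_label f u w2 = del_label f Q (inl m').
  by have := step_label_del U2 f; rewrite -!catA /= ohead_rev_cat.
have D2 : del_pred u w2 = Q by have := del_pred_del U2; rewrite -!catA /= ohead_rev_cat.
(* The second deletion on the chain through w1 sees the marked predecessor P again if r is
   empty, and otherwise a predecessor inside r, which cannot be P. *)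
have second1 : del_label (mark_used used P) (ohead (rev (p ++ r))) (inl m') = l2.
  rewrite /l2; have [-> | /eqP rn] := r =P [::]; first by rewrite cats0 del_label_marked.
  rewrite ohead_rev_cat // -[inl m :: r]/([:: inl m] ++ r) ohead_rev_cat //.
  apply: del_label_mark_other => k HQ; apply/eqP => HP.
  by apply: (PQ k HP); rewrite -[inl m :: r]/([:: inl m] ++ r) ohead_rev_cat.
have second2 : del_label (mark_used used Q) P (inl m) = l1.
  by apply: del_label_mark_other => k HP; apply/eqP => HQ; apply: PQ HP HQ.
rewrite /interval_labels E1 E2 D2 (del_pred_del U) !step_label_del // second1 second2.
split => //; first by rewrite uA mem_cat l1_in.
  by rewrite uA mem_cat l2_in orbT.
by apply: uniq_cat_mem_neq l1_in l2_in; rewrite -uA.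
Qed.

Lemma deldel_interval used : square_interval u v (interval_labels used u v).
Proof.
have [lab1 lab2 l1u l2u l12] := deldel_labels used.
have Sw1 : shuffle M N ((p ++ r) ++ inl m' :: q) by rewrite -catA; apply: shuffle_del Su.
exists w1, w2; split.
  by move=> E; move: U; rewrite uniq_cat_cons E mem_cat mem_head orbT.
split.
  move=> w; split=> [[uw wv] | [->|->]]; first exact: deldel_middle uw wv.
  - by split; [apply: shcover_del | move: (shcover_del Sw1); rewrite -!catA].
  - have Sw2 : shuffle M N w2 by move: (shuffle_del S2); rewrite -catA.
    by split; [move: (shcover_del S2); rewrite -!catA | apply: shcover_del].
exists (del_label used P (inl m)), (del_label used Q (inl m')).
by rewrite !(shuffle_letter_ok Su) //; do !split => //; apply/eqP.
Qed.
End DeletionDeletion.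

Section InsertionInsertion.
Variables (p r q : word) (j j' : nat).
Local Notation u := (p ++ r ++ q).
Local Notation v := (p ++ inr j :: r ++ inr j' :: q).
Local Notation w1 := (p ++ r ++ inr j' :: q).
Local Notation w2 := (p ++ inr j :: r ++ q).
Hypothesis Sv : shuffle M N v.

Let V : uniq v := shuffle_uniq Sv.
Let S2 : shuffle M N ((p ++ inr j :: r) ++ inr j' :: q). Proof. by rewrite -catA. Qed.
Let Sw1 : shuffle M N w1 := shuffle_del Sv.
Let Sw2 : shuffle M N w2. Proof. by move: (shuffle_del S2); rewrite -catA. Qed.

Lemma insins_middle w : shcover M N u w -> shcover M N w v -> w = w1 \/ w = w2.
Proof.
move=> uw wv.
have [[s1 [s2 [c [Eu Ew]]]] [t1 [t2 [d [Ew' Ev]]]]] : insertion u w /\ insertion w v.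
  by apply: shcover2_ins uw wv _; rewrite !size_cat /= !size_cat /= !addnS.
have dw : inr d \notin w by move: V; rewrite Ev Ew' uniq_cat_cons => /andP[].
rewrite Ew'; apply: remove_one_of_two V Ev _.
by apply: contra dw; rewrite Eu Ew; apply: mem_cat_cons.
Qed.

Lemma insins_interval used : square_interval u v (interval_labels used u v).
Proof.
have Sw1' : shuffle M N ((p ++ r) ++ inr j' :: q) by rewrite -catA.
have Su : shuffle M N u := shuffle_del Sw2.
exists w1, w2; split.
  by move=> E; move: V; rewrite uniq_cat_cons E mem_cat mem_head orbT.
split.
  move=> w; split=> [[uw wv] | [->|->]]; first exact: insins_middle uw wv.
  - split; last exact: shcover_ins.
    by move: (@shcover_ins M N (p ++ r) q j'); rewrite -!catA; apply.
  - split; first exact: shcover_ins.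
    by move: (@shcover_ins M N (p ++ inr j :: r) q j'); rewrite -!catA; apply.
have jv : inr j \in v by rewrite mem_cat mem_head orbT.
have j'v : inr j' \in v by rewrite -cat_cons catA mem_cat mem_head orbT.
exists (inr j'), (inr j); split; first exact: shuffle_letter_ok Sv j'v.
split; first exact: shuffle_letter_ok Sv jv.
split; first by case=> E; move: V; rewrite uniq_cat_cons E !mem_cat mem_head !orbT.
have ins1 f : step_label f u w1 = inr j'.
  by move: (step_label_ins (shuffle_uniq Sw1') f); rewrite -!catA.
have ins2 f : step_label f w2 v = inr j'.
  by move: (step_label_ins (shuffle_uniq S2) f); rewrite -!catA.
by rewrite /interval_labels ins1 ins2 !step_label_ins // (shuffle_uniq Sw2).
Qed.
End InsertionInsertion.

Section MixedAfter.
Variables (p r q : word) (m j : nat).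
Local Notation u := (p ++ inl m :: r ++ q).
Local Notation v := (p ++ r ++ inr j :: q).
Local Notation wd := (p ++ r ++ q).
Local Notation wi := (p ++ inl m :: r ++ inr j :: q).
Local Notation wxa := (p ++ inr j :: inl m :: q).
Hypotheses (Su : shuffle M N u) (Sv : shuffle M N v).

Let U : uniq u := shuffle_uniq Su.
Let V : uniq v := shuffle_uniq Sv.
Let Sv' : shuffle M N ((p ++ r) ++ inr j :: q). Proof. by rewrite -catA. Qed.

Lemma mixed_after_middle w : shcover M N u w -> shcover M N w v ->
  [\/ w = wd, w = wi | r = [::] /\ w = wxa].
Proof.
move=> uw wv.
have sub_u : {subset wd <= u} by move=> x; apply: mem_cat_cons.
have sub_v : {subset wd <= v} by move=> x; rewrite catA => /(mem_cat_cons (inr j)); rewrite -catA.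
have onlyA c : inl c \in u -> inl c \notin v -> c = m.
  by move=> cu /(contra (@sub_v _)) cwd; case: (mem_cat_cons_eq cu cwd).
have onlyX k : inr k \in v -> inr k \notin u -> k = j.
  by rewrite catA => kv /(contra (@sub_u _)); rewrite catA => kwd; case: (mem_cat_cons_eq kv kwd).
have size_uv : size u = size v by rewrite !size_cat /= !size_cat /= !addnS.
case: (mixed_middle_shapes uw wv size_uv onlyA onlyX) =>
  [[s1 [s2 [Eu ->]]] | [p' [r' [q' [Eu Ev ->]]]] | [p' [r' [q' [Eu Ev ->]]]]].
- by constructor 1; case: (uniq_cat_cons_inj U Eu) => <- <-.
- by constructor 2; case: (after_shape_inj U V Eu Ev) => <- <- <-.
- by constructor 3; case: (after_before_shape U V Eu Ev) => -> -> <- <-.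
Qed.

Let Su' : shuffle M N ((p ++ inl m :: r) ++ q). Proof. by rewrite -catA. Qed.
Let Swd : shuffle M N ((p ++ r) ++ q). Proof. by rewrite -catA; apply: shuffle_del Su. Qed.
Let Swi : shuffle M N ((p ++ inl m :: r) ++ inr j :: q).
Proof. by apply: (shuffle_ins Su' Sv); rewrite !pmap_cat /= -catA. Qed.

Lemma mixed_after_labels used (l := del_label used (ohead (rev p)) (inl m)) :
  interval_labels used u v wd = (l, inr j) /\ interval_labels used u v wi = (inr j, l).
Proof.
rewrite /interval_labels (step_label_del U).
have -> f : step_label f wd v = inr j.
  by move: (step_label_ins (shuffle_uniq Sv') f); rewrite -!catA.
have ins f : step_label f u wi = inr j.
  by move: (step_label_ins (shuffle_uniq Swi) f); rewrite -!catA.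
have -> : del_pred u wi = None by move: (del_pred_ins (p ++ inl m :: r) q (inr j)); rewrite -!catA.
have Uwi : uniq wi by move: (shuffle_uniq Swi); rewrite -catA.
by rewrite ins (step_label_del Uwi) (eq_del_label _ (fun k _ => mark_used_None used k)).
Qed.

Lemma mixed_after_covers :
  [/\ shcover M N u wd, shcover M N wd v, shcover M N u wi & shcover M N wi v].
Proof.
split; first exact: shcover_del.
- by move: (shcover_ins Swd Sv'); rewrite -!catA.
- by move: (shcover_ins Su' Swi); rewrite -!catA.
- by apply: shcover_del; move: Swi; rewrite -catA.
Qed.

Lemma mixed_after_notin : inr j \notin u.
Proof.
by rewrite mem_cat_cons_neq // catA; move: (shuffle_uniq Sv'); rewrite uniq_cat_cons => /andP[].
Qed.

Lemma mixed_after_interval used : r != [::] -> square_interval u v (interval_labels used u v).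
Proof.
move=> rn; have [Cud Cdv Cui Civ] := mixed_after_covers.
have [lab_d lab_i] := mixed_after_labels used.
set l := del_label used _ (inl m) in lab_d lab_i.
have l_u : l \in u := del_label_ohead_rev_mem used p (inl m) _.
exists wd, wi; split.
  by move=> E; move: U; rewrite uniq_cat_cons E mem_cat mem_head orbT.
split.
  move=> w; split=> [[uw wv] | [->|->]] //.
  by case: (mixed_after_middle uw wv) => [|| [r0]]; auto; rewrite r0 in rn.
exists l, (inr j); split; first exact: shuffle_letter_ok Su l_u.
split; first by apply: (shuffle_letter_ok Sv); rewrite catA mem_cat mem_head orbT.
by split=> // E; move: mixed_after_notin; rewrite -E l_u.
Qed.

End MixedAfter.

Section MixedAdjacent.
Variables (p q : word) (m j : nat).
Local Notation u := (p ++ inl m :: q).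
Local Notation v := (p ++ inr j :: q).
Local Notation wd := (p ++ q).
Local Notation wi := (p ++ inl m :: inr j :: q).
Local Notation wxa := (p ++ inr j :: inl m :: q).
Hypotheses (Su : shuffle M N u) (Sv : shuffle M N v).

Let U : uniq u := shuffle_uniq Su.
Let Swxa : shuffle M N wxa. Proof. by apply: (shuffle_ins Su Sv); rewrite !pmap_cat. Qed.

Lemma mixed_adjacent_xa_covers : shcover M N u wxa /\ shcover M N wxa v.
Proof.
split; first exact: shcover_ins.
by move: (@shcover_del M N (p ++ [:: inr j]) q m); rewrite -!catA; apply.
Qed.

Lemma mixed_adjacent_xa_labels used : ~~ used j -> interval_labels used u v wxa = (inr j, inr j).
Proof.
move=> fresh; rewrite /interval_labels del_pred_ins step_label_ins ?(shuffle_uniq Swxa) //.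
have Uxa : uniq ((p ++ [:: inr j]) ++ inl m :: q) by rewrite -catA (shuffle_uniq Swxa).
move: (step_label_del Uxa (mark_used used None)); rewrite -!catA /= => ->.
by rewrite ohead_rev_cat //= /mark_used orbF (negbTE fresh).
Qed.

Lemma mixed_adjacent_interval used : (forall k, inr k \notin u -> ~~ used k) ->
  pi3_interval u v (interval_labels used u v).
Proof.
have j_u : inr j \notin u := mixed_after_notin (r := [::]) m Sv.
move=> /(_ j j_u) fresh.
have /= [Cud Cdv Cui Civ] := mixed_after_covers (r := [::]) Su Sv.
have /= [lab_d lab_i] := mixed_after_labels (r := [::]) Su Sv used.
have [Cuxa Cxav] := mixed_adjacent_xa_covers.
set l := del_label used _ (inl m) in lab_d lab_i.
have l_u : l \in u := del_label_ohead_rev_mem used p (inl m) _.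
have m_notin : inl m \notin wd by move: U; rewrite uniq_cat_cons => /andP[].
exists wi, wd, wxa; split.
  by move=> E; move: m_notin; rewrite -E mem_cat mem_head orbT.
split; first by case/catsI.
split.
  by move=> E; move: m_notin; rewrite E !mem_cat !inE eqxx !orbT.
split.
  move=> w; split=> [[uw wv] | [->|[->|->]]] //.
  by case: (mixed_after_middle (r := [::]) Su Sv uw wv) => [|| []]; auto.
exists j, l; split.
  by apply: (shuffle_letter_ok Sv (l := inr j)); rewrite mem_cat mem_head orbT.
split; first exact: shuffle_letter_ok Su l_u.
split; first by move=> E; move: j_u; rewrite -E l_u.
by rewrite mixed_adjacent_xa_labels.
Qed.

End MixedAdjacent.

Section MixedBefore.
Variables (p r q : word) (m j : nat).
Local Notation u := (p ++ r ++ inl m :: q).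
Local Notation v := (p ++ inr j :: r ++ q).
Local Notation wd := (p ++ r ++ q).
Local Notation wi := (p ++ inr j :: r ++ inl m :: q).
Hypotheses (Su : shuffle M N u) (Sv : shuffle M N v) (rn : r != [::]).

Let V : uniq v := shuffle_uniq Sv.
Let Su' : shuffle M N ((p ++ r) ++ inl m :: q). Proof. by rewrite -catA. Qed.
Let U' : uniq ((p ++ r) ++ inl m :: q) := shuffle_uniq Su'.

Lemma mixed_before_middle w : shcover M N u w -> shcover M N w v -> w = wd \/ w = wi.
Proof.
move=> uw wv.
have sub_u : {subset wd <= u} by move=> x; rewrite catA => /(mem_cat_cons (inl m)); rewrite -catA.
have sub_v : {subset wd <= v} by move=> x; apply: mem_cat_cons.
have onlyA c : inl c \in u -> inl c \notin v -> c = m.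
  by rewrite catA => cu /(contra (@sub_v _)); rewrite catA => cwd; case: (mem_cat_cons_eq cu cwd).
have onlyX k : inr k \in v -> inr k \notin u -> k = j.
  by move=> kv /(contra (@sub_u _)) kwd; case: (mem_cat_cons_eq kv kwd).
have size_uv : size u = size v by rewrite !size_cat /= !size_cat /= !addnS.
case: (mixed_middle_shapes uw wv size_uv onlyA onlyX) =>
  [[s1 [s2 [Eu ->]]] | [p' [r' [q' [Eu Ev _]]]] | [p' [r' [q' [Eu Ev ->]]]]].
- by left; move: Eu; rewrite catA => /(uniq_cat_cons_inj U') [<- <-]; rewrite catA.
- have Ua : uniq (p' ++ inl m :: r' ++ q') by rewrite -Eu (shuffle_uniq Su).
  have Ux : uniq (p' ++ r' ++ inr j :: q') by rewrite -Ev.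
  by case: (after_before_shape Ua Ux (esym Eu) (esym Ev)) => _ r0; have := rn; rewrite r0.
- by right; case: (before_shape_inj (shuffle_uniq Su) V Eu Ev) => <- <- <-.
Qed.

Let Swi : shuffle M N wi. Proof. by apply: (shuffle_ins Su Sv); rewrite !pmap_cat /= !pmap_cat. Qed.
Let Swi' : shuffle M N ((p ++ inr j :: r) ++ inl m :: q). Proof. by rewrite -catA. Qed.

Lemma mixed_before_labels used (l := del_label used (ohead (rev r)) (inl m)) :
  interval_labels used u v wd = (l, inr j) /\ interval_labels used u v wi = (inr j, l).
Proof.
have pr_r s : ohead (rev (s ++ r)) = ohead (rev r) by apply: ohead_rev_cat.
have pjr : ohead (rev (p ++ inr j :: r)) = ohead (rev r) by rewrite -cat1s catA pr_r.
rewrite /interval_labels del_pred_ins !step_label_ins ?(shuffle_uniq Swi) //.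
move: (step_label_del U' used) (step_label_del (shuffle_uniq Swi') (mark_used used None)).
rewrite -!catA /= pr_r pjr => -> ->.
by rewrite (eq_del_label _ (fun k _ => mark_used_None used k)).
Qed.

Lemma mixed_before_interval used : square_interval u v (interval_labels used u v).
Proof.
have [lab_d lab_i] := mixed_before_labels used.
set l := del_label used _ (inl m) in lab_d lab_i.
have l_u : l \in u by rewrite mem_cat del_label_ohead_rev_mem orbT.
have j_wd : inr j \notin wd by move: V; rewrite uniq_cat_cons => /andP[].
exists wd, wi; split.
  by move=> E; move: j_wd; rewrite E mem_cat mem_head orbT.
split.
  move=> w; split=> [[uw wv] | [->|->]]; first exact: mixed_before_middle uw wv.
  - split; last by apply: shcover_ins => //; move: (shuffle_del Su'); rewrite -catA.
    by move: (shcover_del Su'); rewrite -!catA.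
  - split; first exact: shcover_ins.
    by move: (shcover_del Swi'); rewrite -!catA.
exists l, (inr j); split; first exact: shuffle_letter_ok Su l_u.
split; first by apply: (shuffle_letter_ok Sv); rewrite mem_cat mem_head orbT.
have j_u : inr j \notin u by rewrite catA mem_cat_cons_neq // -catA.
by split=> // E; move: j_u; rewrite -E l_u.
Qed.

End MixedBefore.

Lemma mixed_interval (used : pred nat) u v s1 s2 t1 t2 m j :
  u = s1 ++ inl m :: s2 -> v = t1 ++ inr j :: t2 -> s1 ++ s2 = t1 ++ t2 ->
  shuffle M N u -> shuffle M N v -> (forall k, inr k \notin u -> ~~ used k) ->
  square_interval u v (interval_labels used u v) \/ pi3_interval u v (interval_labels used u v).
Proof.
move=> -> -> /cat_eq_cat[r [[-> ->] | [-> ->]]] Su Sv fresh.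
- have [r0 | rn] := eqVneq r [::].
    by right; rewrite r0 cats0 in Su Sv fresh *; apply: mixed_adjacent_interval.
  by left; rewrite -catA in Su fresh *; apply: mixed_before_interval.
- have [r0 | rn] := eqVneq r [::].
    by right; rewrite r0 cats0 in Su Sv fresh *; apply: mixed_adjacent_interval.
  by left; rewrite -catA in Sv *; apply: mixed_after_interval.
Qed.

Lemma rank_two_interval (used : pred nat) u w v : shcover M N u w -> shcover M N w v ->
  (forall k, inr k \notin u -> ~~ used k) ->
  square_interval u v (interval_labels used u v) \/ pi3_interval u v (interval_labels used u v).
Proof.
move=> uw wv fresh; have Su : shuffle M N u by case: uw.
have Sv : shuffle M N v by case: wv => _ [].
case: uw => _ [_ [[s1 [s2 [c [Eu Ew]]]] | [s1 [s2 [c [Eu Ew]]]]]];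
case: wv => _ [_ [[t1 [t2 [d [Ew' Ev]]]] | [t1 [t2 [d [Ew' Ev]]]]]];
have E := etrans (esym Ew) Ew'.
- left; rewrite Eu Ev in Su *.
  case/cat_eq_cat_cons: E Su => [[r [-> ->]] | [r [-> ->]]]; rewrite -?catA /= => Su;
    exact: deldel_interval Su used.
- exact: mixed_interval Eu Ev E Su Sv fresh.
- case: (cat_cons_eq_cat_cons E isT) => [[r [E1 E2]] | [r [E1 E2]]].
  + apply: (@mixed_interval used u v t1 (r ++ s2) (t1 ++ r) s2 d c) => //.
    * by rewrite Eu E1 -catA.
    * by rewrite Ev E2 catA.
    * by rewrite catA.
  + apply: (@mixed_interval used u v (s1 ++ r) t2 s1 (r ++ t2) d c) => //.
    * by rewrite Eu E2 catA.
    * by rewrite Ev E1 -catA.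
    * by rewrite catA.
- left; rewrite Eu Ev in Sv *.
  case/cat_eq_cat_cons: (esym E) Sv => [[r [-> ->]] | [r [-> ->]]]; rewrite -?catA /= => Sv;
    exact: insins_interval Sv used.
Qed.

End Intervals.

Theorem lemma3p2 (M N : nat) (u v : word) (lo hi : seq word) :
  cpath (shcover M N) (hat0 M) lo -> last (hat0 M) lo = u ->
  cpath (shcover M N) v hi -> last v hi = hat1 N ->
  rank_two M N u v ->
  let lab (w : word) :=
    (Lambda (hat0 M :: lo ++ w :: v :: hi) (size lo),
     Lambda (hat0 M :: lo ++ w :: v :: hi) (size lo).+1) in
  (* (1) interval isomorphic to C_2 x C_2 *)
  (exists w1 w2 : word, w1 <> w2 /\
     (forall w, (shcover M N u w /\ shcover M N w v) <-> (w = w1 \/ w = w2)) /\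
     exists l1 l2 : letter, letter_ok M N l1 /\ letter_ok M N l2 /\ l1 <> l2 /\
       lab w1 = (l1, l2) /\ lab w2 = (l2, l1))
  \/
  (* (2) interval isomorphic to Pi_3 *)
  (exists w1 w2 w3 : word, w1 <> w2 /\ w1 <> w3 /\ w2 <> w3 /\
     (forall w, (shcover M N u w /\ shcover M N w v) <-> (w = w1 \/ w = w2 \/ w = w3)) /\
     exists (j : nat) (l : letter), (0 < j <= N) /\ letter_ok M N l /\ l <> inr j /\
       lab w1 = (inr j, l) /\ lab w2 = (l, inr j) /\ lab w3 = (inr j, inr j)).
Proof.
move=> path_lo last_lo _ _ [[w [uw wv]] _] lab.
have lab_E : lab =1 interval_labels (chain_used (hat0 M) lo) u v.
  by move=> w'; rewrite /lab Lambda_interval last_lo.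
have fresh k : inr k \notin u -> ~~ chain_used (hat0 M) lo k.
  by rewrite -last_lo; apply: chain_used_notin path_lo.
case: (rank_two_interval uw wv fresh) => [sq | pi3]; [left | right].
- exact: eq_square_interval lab_E sq.
- exact: eq_pi3_interval lab_E pi3.
Qed.
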